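(* Let $W$ be an affine Weyl group, $w\in W$, $i\in D_R(w)$, and let $r_1,\dots,r_n$ be reflections with $H_{r_t}=H_{\alpha,c+t}$ for some root $\alpha$ and $c\in\mathbb{Z}$, such that for all $1\le t\le n$, $$\ell(r_t\cdots r_1ws_i)>\ell(r_{t-1}\cdots r_1ws_i)\quad\text{and}\quad r_t\cdots r_1ws_i\neq r_{t-1}\cdots r_1w.$$ Then $r_{n-1}\cdots r_1w\in H^{\mathbf 1}_{r_n}$, i.e. $\ell(r_nr_{n-1}\cdots r_1w)>\ell(r_{n-1}\cdots r_1w)$.
   Context: $W$ is the affine Weyl group of a crystallographic root system $\Phi$, a Coxeter group with simple generators $s_i$; $H_{\beta,k}=\{v:\langle v,\beta\rangle=k\}$ and reflections of $W$ are the reflections in these hyperplanes; $H_r$ is the hyperplane of reflection $r$. Elements are identified with alcoves. $\ell$ is length, $D_R(w)=\{i:\ell(ws_i)<\ell(w)\}$. For a reflection $r$, $H^{\mathbf 1}_r=\{y:\ell(ry)>\ell(y)\}$. *)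

From HB Require Import structures.
From mathcomp Require Import all_boot all_order all_algebra.
From mathcomp Require Import boolp reals.
From Stdlib Require List.
Set Implicit Arguments. Unset Strict Implicit. Unset Printing Implicit Defensive.
Import Order.TTheory GRing.Theory Num.Theory.
Local Open Scope ring_scope.

Section AffineWeyl.
Variables (R : realType) (d : nat).
Implicit Types (u v beta : 'rV[R]_d).

Definition dot u v : R := \sum_(i < d) u 0 i * v 0 i.

Definition refl beta (k : R) : 'rV[R]_d -> 'rV[R]_d :=
  fun v => v - ((dot v beta - k) * 2 / dot beta beta) *: beta.

Definition root_system (Phi : seq 'rV[R]_d) : Prop :=
  [/\ 0 \notin Phi,
      (forall v, exists c : 'I_(size Phi) -> R,
           v = \sum_(i < size Phi) c i *: Phi`_i),
      (forall a b, a \in Phi -> b \in Phi -> refl a 0 b \in Phi),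
      (forall a b, a \in Phi -> b \in Phi ->
           exists m : int, 2 * dot a b / dot a a = m%:~R) &
      (forall a (c : R), a \in Phi -> c *: a \in Phi -> c = 1 \/ c = -1)].

Definition regular (Phi : seq 'rV[R]_d) z := forall b, b \in Phi -> dot b z != 0.
Definition pos_root (Phi : seq 'rV[R]_d) z b := b \in Phi /\ 0 < dot b z.

Definition simple_root (Phi : seq 'rV[R]_d) z a :=
  pos_root Phi z a /\
  ~ (exists b c, pos_root Phi z b /\ pos_root Phi z c /\ a = b + c).

(* Highest roots (one per irreducible component): roots maximal for the
   dominance order (g >= t iff g - t is a sum of positive roots). *)
Definition highest_root (Phi : seq 'rV[R]_d) z t :=
  t \in Phi /\
  ~ (exists g (l : seq 'rV[R]_d), g \in Phi /\ l <> [::] /\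
       (forall b, List.In b l -> pos_root Phi z b) /\ g - t = \sum_(b <- l) b).

(* Simple generators: reflections in the walls of the fundamental alcove
   A_0 = {v | 0 < <v,b> < 1 for all positive roots b}. *)
Definition simple_refl (Phi : seq 'rV[R]_d) z (s : 'rV[R]_d -> 'rV[R]_d) :=
  (exists a, simple_root Phi z a /\ s = refl a 0) \/
  (exists t, highest_root Phi z t /\ s = refl t 1).

Definition wprod (l : seq ('rV[R]_d -> 'rV[R]_d)) : 'rV[R]_d -> 'rV[R]_d :=
  foldr (fun f g => f \o g) id l.

Definition aff_reflection (Phi : seq 'rV[R]_d) (f : 'rV[R]_d -> 'rV[R]_d) :=
  exists beta (k : int), beta \in Phi /\ f = refl beta k%:~R.
Definition in_W (Phi : seq 'rV[R]_d) (w : 'rV[R]_d -> 'rV[R]_d) :=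
  exists l, (forall f, List.In f l -> aff_reflection Phi f) /\ w = wprod l.

Definition has_word_len (Phi : seq 'rV[R]_d) z w (k : nat) : bool :=
  `[< exists l, size l = k /\ (forall s, List.In s l -> simple_refl Phi z s)
                /\ w = wprod l >].
Definition len (Phi : seq 'rV[R]_d) z w : nat :=
  match pselect (exists k, has_word_len Phi z w k) with
  | left P => ex_minn P
  | right _ => 0%N
  end.

End AffineWeyl.

Fixpoint rprod (T : Type) (r : nat -> T -> T) (t : nat) : T -> T :=
  match t with 0 => id | t'.+1 => r t'.+1 \o rprod r t' end.

From HB Require Import structures.
From mathcomp Require Import all_boot all_order all_algebra.
From mathcomp Require Import boolp reals.
From mathcomp Require Import ring lra zify.
Import Order.TTheory GRing.Theory Num.Theory.
Set Implicit Arguments. Unset Strict Implicit. Unset Printing Implicit Defensive.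
Local Open Scope ring_scope.

(* Let p be a point of the fundamental alcove lying on no hyperplane H_{b,k}.
   Exchange property: if H_r separates p from f p, where f is a product of
   simple reflections, then some letter of a word for f can be deleted, so
   l(r f) < l(f).  Put y = r_{n-1} ... r_1 w and H = H_{r_n}.  The hypothesis at
   t = n says that H separates neither p from y s_i p (otherwise the length
   would drop) nor y p from y s_i p (otherwise r_n y s_i = y).  Hence H does
   not separate p from y p, so it separates p from r_n y p, and the exchange
   property applied to r_n y gives l(y) < l(r_n y). *)

Ltac vec_ring := apply/matrixP => ? ?; rewrite !mxE; ring.

Section InnerProduct.
Variables (R : realType) (d : nat).
Implicit Types (u v w : 'rV[R]_d).

Lemma dotC u v : dot u v = dot v u.
Proof. by apply: eq_bigr => i _; rewrite mulrC. Qed.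

Lemma dotDl u v w : dot (u + v) w = dot u w + dot v w.
Proof. by rewrite /dot -big_split; apply: eq_bigr => i _; rewrite mxE mulrDl. Qed.

Lemma dotZl (a : R) u w : dot (a *: u) w = a * dot u w.
Proof. by rewrite /dot mulr_sumr; apply: eq_bigr => i _; rewrite mxE mulrA. Qed.

Lemma dotNl u w : dot (- u) w = - dot u w.
Proof. by rewrite -scaleN1r dotZl mulN1r. Qed.

Lemma dotBl u v w : dot (u - v) w = dot u w - dot v w.
Proof. by rewrite dotDl dotNl. Qed.

Lemma dotZr (a : R) u w : dot w (a *: u) = a * dot w u.
Proof. by rewrite dotC dotZl dotC. Qed.

Lemma dotNr u w : dot w (- u) = - dot w u.
Proof. by rewrite dotC dotNl dotC. Qed.

Lemma dotBr u v w : dot w (u - v) = dot w u - dot w v.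
Proof. by rewrite dotC dotBl !(dotC w). Qed.

Lemma dot_ge0 u : 0 <= dot u u.
Proof. by apply: sumr_ge0 => i _; rewrite -expr2 sqr_ge0. Qed.

Lemma dot_eq0 u : dot u u = 0 -> u = 0.
Proof.
move=> u0; apply/matrixP => i j; rewrite mxE (ord1 i).
have sq0 : \sum_k u 0 k ^+ 2 = 0 by rewrite -[RHS]u0; apply: eq_bigr => k _.
have /eqP := @psumr_eq0P _ _ xpredT _ (fun k _ => sqr_ge0 (u 0 k)) sq0 j isT.
by rewrite sqrf_eq0 => /eqP.
Qed.

Lemma dot_gt0 u : u != 0 -> 0 < dot u u.
Proof.
by move=> u_neq0; rewrite lt_def dot_ge0 andbT; apply: contraNneq u_neq0 => /dot_eq0 ->.
Qed.

End InnerProduct.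

Section Reflections.
Variables (R : realType) (d : nat).
Implicit Types (b g u v : 'rV[R]_d) (m : R).

Definition cartan g b : R := 2 * dot g b / dot g g.

Definition side b m v : R := dot v b - m.

Definition sep b (k : int) u v := side b k%:~R u * side b k%:~R v < 0.

Lemma refl0E g b : refl g 0 b = b - cartan g b *: g.
Proof. by rewrite /refl /cartan subr0 (dotC b g) [dot g b * 2]mulrC. Qed.

Lemma dot_cartan g b : dot g g != 0 -> dot g b = cartan g b * dot g g / 2.
Proof. by move=> gg; rewrite /cartan; field. Qed.

Lemma side_refl b m v : dot b b != 0 -> side b m (refl b m v) = - side b m v.
Proof. by move=> bb; rewrite /side /refl dotBl dotZl; field. Qed.

Lemma reflK b m : dot b b != 0 -> involutive (refl b m).
Proof.
move=> bb v; have := side_refl m v bb; rewrite /side => e.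
rewrite {1}/refl (_ : dot (refl b m v) b = 2 * m - dot v b); last by lra.
by rewrite /refl; apply/matrixP => i j; rewrite !mxE; field.
Qed.

Lemma reflN b m v : refl (- b) (- m) v = refl b m v.
Proof.
rewrite /refl dotNr dotNl dotNr opprK; apply/matrixP => i j; rewrite !mxE !opprK.
have [->|bb] := eqVneq (dot b b) 0; first by rewrite !invr0 !mulr0 !mul0r.
by field.
Qed.

Lemma dot_refl g m v b : dot g g != 0 ->
  dot (refl g m v) b = dot v (refl g 0 b) + m * cartan g b.
Proof.
by move=> gg; rewrite /refl /cartan dotBl dotBr dotZl dotZr subr0 (dotC b g) (dotC v g); field.
Qed.

Lemma dot_refl0 g b : dot g g != 0 -> dot (refl g 0 b) (refl g 0 b) = dot b b.
Proof.
by move=> gg; rewrite /refl subr0 !dotBl !dotBr !dotZl !dotZr (dotC b g); field.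
Qed.

Lemma refl_conj g m b (k : R) v : dot g g != 0 -> dot b b != 0 ->
  refl b k (refl g m v) = refl g m (refl (refl g 0 b) (k - m * cartan g b) v).
Proof.
move=> gg bb; set b1 := refl g 0 b.
have bb1 : dot b1 b1 = dot b b by apply: dot_refl0.
have e1 : b1 = b - cartan g b *: g by apply: refl0E.
have dot1 u : dot u b1 = dot u b - cartan g b * dot u g by rewrite e1 dotBr dotZr.
rewrite /refl -/b1; clearbody b1.
rewrite bb1 !(dotBl, dotZl) !dot1 e1 dotBl dotZl (dotC b g).
by apply/matrixP => i j; rewrite !mxE /cartan (dotC v g); field; rewrite gg bb.
Qed.

Lemma sepC b k u v : sep b k u v = sep b k v u.
Proof. by rewrite /sep mulrC. Qed.

Lemma sepN b k u v : sep (- b) (- k) u v = sep b k u v.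
Proof. by rewrite /sep /side !dotNr mulrNz -!opprD mulrNN. Qed.

Lemma sep_split b k u v w : side b k%:~R v != 0 ->
  sep b k u w -> sep b k u v \/ sep b k v w.
Proof.
rewrite /sep => v_off uw; have v2 : 0 < side b k%:~R v ^+ 2 by rewrite exprn_even_gt0.
have [uv|uv] := ltP (side b k%:~R u * side b k%:~R v) 0; first by left.
by right; rewrite ltNge; apply/negP => vw; nra.
Qed.

Lemma sep_refl b k u v : dot b b != 0 -> side b k%:~R u != 0 -> side b k%:~R v != 0 ->
  ~ sep b k u v -> sep b k u (refl b k%:~R v).
Proof.
rewrite /sep => bb u_off v_off uv; rewrite side_refl // mulrN oppr_lt0.
by rewrite lt_def mulf_neq0 //= leNgt; apply/negP.
Qed.

Lemma sep_between b k u v (lo hi : R) : sep b k u v ->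
  lo < dot u b < hi -> lo < dot v b < hi -> lo < k%:~R < hi.
Proof.
rewrite /sep /side => uv /andP[u1 u2] /andP[v1 v2].
by apply/andP; split; rewrite ltNge; apply/negP => hk; nra.
Qed.

End Reflections.

Section Roots.
Variables (R : realType) (d : nat) (Phi : seq 'rV[R]_d).
Hypothesis RS : root_system Phi.
Implicit Types (a b : 'rV[R]_d).

Lemma root_neq0 a : a \in Phi -> a != 0.
Proof. by case: RS => Phi0 _ _ _ _; apply: contraTneq => ->. Qed.

Lemma dot_root_gt0 a : a \in Phi -> 0 < dot a a.
Proof. by move/root_neq0; apply: dot_gt0. Qed.

Lemma dot_root_neq0 a : a \in Phi -> dot a a != 0.
Proof. by move/dot_root_gt0/lt0r_neq0. Qed.

Lemma root_refl0 a b : a \in Phi -> b \in Phi -> refl a 0 b \in Phi.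
Proof. by case: RS => _ _ h _ _; apply: h. Qed.

Lemma refl0_self a : a \in Phi -> refl a 0 a = - a.
Proof.
move=> /dot_root_neq0 aa.
by rewrite /refl subr0; apply/matrixP => i j; rewrite !mxE; field.
Qed.

Lemma rootN a : a \in Phi -> - a \in Phi.
Proof. by move=> ha; rewrite -refl0_self // root_refl0. Qed.

Lemma cartan_int a b : a \in Phi -> b \in Phi -> exists m : int, cartan a b = m%:~R.
Proof. by case: RS => _ _ _ h _; apply: h. Qed.

Lemma root_reduced a (c : R) : a \in Phi -> c *: a \in Phi -> c = 1 \/ c = -1.
Proof. by case: RS => _ _ _ _ h; apply: h. Qed.

Lemma refl0N a b : refl a 0 (- b) = - refl a 0 b.
Proof. by rewrite !refl0E /cartan dotNr; vec_ring. Qed.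

(* Strict Cauchy-Schwarz: distinct non-opposite roots are not proportional. *)
Lemma dot_root_sqr_lt a b : a \in Phi -> b \in Phi -> a != b -> a != - b ->
  dot a b ^+ 2 < dot a a * dot b b.
Proof.
move=> ha hb nab nab'; have aa := dot_root_gt0 ha.
rewrite ltNge; apply/negP => H.
set t := dot a b / dot a a.
have E : dot (b - t *: a) (b - t *: a) = dot b b - dot a b ^+ 2 / dot a a.
  by rewrite !(dotBl, dotBr, dotZl, dotZr) (dotC b a) /t; field; rewrite gt_eqF.
have : dot (b - t *: a) (b - t *: a) = 0.
  apply/eqP; rewrite eq_le dot_ge0 andbT E subr_le0 ler_pdivlMr //.
  by rewrite mulrC.
move/dot_eq0/eqP; rewrite subr_eq0 => /eqP Eb.
have : t *: a \in Phi by rewrite -Eb.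
case/(root_reduced ha) => Et; move: Eb; rewrite Et ?scale1r ?scaleN1r => Eb.
  by rewrite Eb eqxx in nab.
by rewrite Eb opprK eqxx in nab'.
Qed.

Lemma cartan_mul_lt4 a b : a \in Phi -> b \in Phi -> a != b -> a != - b ->
  cartan a b * cartan b a < 4.
Proof.
move=> ha hb nab nab'; have := dot_root_sqr_lt ha hb nab nab'.
have aa := dot_root_gt0 ha; have bb := dot_root_gt0 hb.
rewrite /cartan (dotC b a) => H.
have -> : 2 * dot a b / dot a a * (2 * dot a b / dot b b) =
          4 * (dot a b ^+ 2 / (dot a a * dot b b)) by field; rewrite !gt_eqF.
rewrite -[X in _ < X]mulr1 ltr_pM2l //.
by rewrite ltr_pdivrMr ?mul1r // mulr_gt0.
Qed.

Lemma cartan_pos_int a b : a \in Phi -> b \in Phi -> a != b -> 0 < dot a b ->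
  exists m m' : int,
    [/\ cartan a b = m%:~R, cartan b a = m'%:~R, 0 < m, 0 < m' & m * m' < 4].
Proof.
move=> ha hb nab ab.
have nab' : a != - b.
  by apply: contraTneq ab => ->; rewrite dotNl oppr_gt0 -leNgt dot_ge0.
have aa := dot_root_gt0 ha; have bb := dot_root_gt0 hb.
have [m Em] := cartan_int ha hb; have [m' Em'] := cartan_int hb ha.
exists m, m'; split => //.
- by rewrite -(ltr_int R) -Em /cartan divr_gt0 ?mulr_gt0.
- by rewrite -(ltr_int R) -Em' /cartan dotC divr_gt0 ?mulr_gt0.
- by rewrite -(ltr_int R) intrM -Em -Em' cartan_mul_lt4.
Qed.

Lemma cartan_pos_cases a b : a \in Phi -> b \in Phi -> a != b -> 0 < dot a b ->
  [\/ cartan a b = 1, cartan a b = 2 | cartan a b = 3].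
Proof.
move=> ha hb nab ab; have [m [m' [-> _ m_gt0 m'_gt0 lt4]]] := cartan_pos_int ha hb nab ab.
have : (m = 1 \/ m = 2 \/ m = 3)%R by lia.
by case=> [->|[->|->]]; [apply: Or31|apply: Or32|apply: Or33].
Qed.

Lemma rootB a b : a \in Phi -> b \in Phi -> 0 < dot a b -> a != b -> a - b \in Phi.
Proof.
move=> ha hb ab nab; have [m [m' [Em Em' m_gt0 m'_gt0 lt4]]] := cartan_pos_int ha hb nab ab.
have : (m' = 1 \/ m = 1)%R by lia.
case=> [e|e].
  by rewrite -[a - b](_ : refl b 0 a = _) ?root_refl0 // refl0E Em' e scale1r.
by rewrite -opprB -[b - a](_ : refl a 0 b = _) ?rootN ?root_refl0 // refl0E Em e scale1r.
Qed.

End Roots.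

Section PositiveRoots.
Variables (R : realType) (d : nat) (Phi : seq 'rV[R]_d) (z : 'rV[R]_d).
Hypothesis RS : root_system Phi.
Hypothesis REG : regular Phi z.
Implicit Types (a b t : 'rV[R]_d).

Definition pos b := 0 < dot b z.

Lemma posN b : b \in Phi -> ~ pos b -> pos (- b).
Proof.
by move=> hb /negP; rewrite /pos dotNl oppr_gt0 -leNgt le_eqVlt (negbTE (REG hb)).
Qed.

Lemma simple_subr_pos a b : simple_root Phi z a -> b \in Phi -> pos b ->
  b - a \in Phi -> pos (b - a).
Proof.
move=> [_ indec] hb pb hba; apply: contrapT => /(posN hba) pab.
by apply: indec; exists b, (- (b - a)); split; [|split; [split; [exact: rootN|]|vec_ring]].
Qed.

Lemma simple_refl0_pos a b : simple_root Phi z a -> b \in Phi -> pos b -> b != a ->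
  pos (refl a 0 b).
Proof.
move=> sa hb pb nba; have [[ha pa] _] := sa.
have hr := root_refl0 RS ha hb; rewrite refl0E in hr *.
have aa := dot_root_gt0 RS ha.
have [ab_le0|ab_gt0] := lerP (dot a b) 0.
  have : cartan a b <= 0.
    by apply: mulr_le0_ge0; [rewrite pmulr_rle0|rewrite invr_ge0 ltW].
  by move: pa pb; rewrite /pos dotBl dotZl; nra.
have sub := simple_subr_pos sa.
have hba : b - a \in Phi by apply: rootB; rewrite // dotC.
have pba := sub _ hb pb hba.
have nab : a != b by rewrite eq_sym.
case: (cartan_pos_cases RS ha hb nab ab_gt0) => E; rewrite E ?scale1r // in hr *.
  have e : b - 2 *: a = b - a - a by vec_ring.
  by rewrite e in hr *; apply: sub.
have nbaa : b - a != a.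
  apply/eqP => e; have : 2 *: a \in Phi.
    by rewrite (_ : 2 *: a = b) // -(subrK a b) e; vec_ring.
  by case/(root_reduced RS ha) => e2; lra.
have hbaa : b - a - a \in Phi.
  by apply: rootB => //; rewrite dotBl (dotC b a) (dot_cartan _ (lt0r_neq0 aa)) E; lra.
have e : b - 3 *: a = b - a - a - a by vec_ring.
by rewrite e in hr *; apply: (sub) => //; apply: sub.
Qed.

Lemma highest_pos t : highest_root Phi z t -> pos t.
Proof.
move=> [ht nh]; apply: contrapT => /(posN ht) pt.
apply: nh; exists (- t), [:: - t; - t]; split; first exact: rootN.
split=> //; split; last by rewrite !big_cons big_nil; vec_ring.
by move=> b /= [<-|[<-|[]]]; split=> //; exact: rootN.
Qed.

Lemma highest_dot_ge0 t b : highest_root Phi z t -> b \in Phi -> pos b -> 0 <= dot t b.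
Proof.
move=> H hb pb; have [ht nh] := H; rewrite leNgt; apply/negP => tb.
have ntb : t != - b.
  by apply: contraTneq (highest_pos H) => ->; rewrite /pos dotNl oppr_gt0 -leNgt ltW.
have htb : t - - b \in Phi by apply: rootB; rewrite ?rootN // dotNr oppr_gt0.
apply: nh; exists (t - - b), [:: b]; split=> //; split=> //; split.
  by move=> x /= [<-|[]].
by rewrite big_cons big_nil; vec_ring.
Qed.

Lemma highest_subr t b : highest_root Phi z t -> b \in Phi -> pos b -> b != t ->
  0 < dot t b -> t - b \in Phi /\ pos (t - b).
Proof.
move=> [ht nh] hb pb nbt tb.
have htb : t - b \in Phi by apply: rootB; rewrite // eq_sym.
split=> //; apply: contrapT => /(posN htb) ptb.
apply: nh; exists b, [:: - (t - b)]; split=> //; split=> //; split.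
  by move=> x /= [<-|[]]; split; [exact: rootN|].
by rewrite big_cons big_nil; vec_ring.
Qed.

Lemma highest_cartan t b : highest_root Phi z t -> b \in Phi -> pos b -> b != t ->
  cartan t b = 0 \/ cartan t b = 1.
Proof.
move=> H hb pb nbt; have [ht nh] := H.
have [tb_le0|tb_gt0] := lerP (dot t b) 0.
  left; have tb0 : dot t b = 0 by apply/eqP; rewrite eq_le tb_le0 highest_dot_ge0.
  by rewrite /cartan tb0 mulr0 mul0r.
have [htb ptb] := highest_subr H hb pb nbt tb_gt0.
have hr := rootN RS (root_refl0 RS ht hb).
have ntb : t != b by rewrite eq_sym.
case: (cartan_pos_cases RS ht hb ntb tb_gt0) => E; [by right| |]; exfalso; apply: nh.
- exists (- refl t 0 b), [:: t - b]; split=> //; split=> //; split.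
    by move=> x /= [<-|[]].
  by rewrite big_cons big_nil refl0E E; vec_ring.
- exists (- refl t 0 b), [:: t - b; t]; split=> //; split=> //; split.
    by move=> x /= [<-|[<-|[]]] //; split=> //; apply: highest_pos.
  by rewrite !big_cons big_nil refl0E E; vec_ring.
Qed.

End PositiveRoots.

Lemma intr_eq_between (R : realType) (m k : int) :
  (m%:~R - 1 : R) < k%:~R < (m%:~R + 1 : R) -> k = m.
Proof.
move=> /andP[lo hi].
have : (m - 1 < k < m + 1)%R by rewrite -!(ltr_int R) intrB intrD lo.
lia.
Qed.

Section AlcovePoint.
Variables (R : realType) (d : nat) (Phi : seq 'rV[R]_d) (z : 'rV[R]_d).
Hypothesis RS : root_system Phi.
Hypothesis REG : regular Phi z.
Implicit Types (a b t : 'rV[R]_d).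

Definition alcove_pt : 'rV[R]_d := (1 + \sum_(x <- Phi) `|dot x z|)^-1 *: z.

Local Notation p := alcove_pt.

Lemma alcove_pt_range b : b \in Phi -> -1 < dot p b < 1.
Proof.
move=> hb; rewrite -ltr_norml; set M := \sum_(x <- Phi) `|dot x z|.
have bM : `|dot b z| <= M.
  by rewrite /M (perm_big _ (perm_to_rem hb)) big_cons lerDl sumr_ge0.
have M1_gt0 : 0 < 1 + M by apply: ltr_pwDl; rewrite // (le_trans _ bM).
rewrite /alcove_pt dotZl dotC normrM gtr0_norm ?invr_gt0 // ltr_pdivrMl //.
by rewrite mulr1 ltr_pwDl.
Qed.

Lemma alcove_pt_pos b : b \in Phi -> pos z b -> 0 < dot p b < 1.
Proof.
move=> hb pb; have /andP[_ ->] := alcove_pt_range hb.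
have M1_gt0 : 0 < 1 + \sum_(x <- Phi) `|dot x z| by rewrite ltr_pwDl ?sumr_ge0.
by rewrite /alcove_pt dotZl dotC mulr_gt0 ?invr_gt0.
Qed.

Lemma alcove_pt_dot_neq0 b : b \in Phi -> dot p b != 0.
Proof.
move=> hb; have [pb|npb] := pselect (pos z b).
  by have /andP[/lt0r_neq0 ? _] := alcove_pt_pos hb pb.
have /andP[/lt0r_neq0 + _] := alcove_pt_pos (rootN RS hb) (posN REG hb npb).
by rewrite dotNr oppr_eq0.
Qed.

Lemma side_alcove_pt_neq0 b (k : int) : b \in Phi -> side b k%:~R p != 0.
Proof.
move=> hb; rewrite /side subr_eq0; apply: contra_neq (alcove_pt_dot_neq0 hb) => pk.
have : k = 0 by apply: (@intr_eq_between R); rewrite -pk mulr0z sub0r add0r alcove_pt_range.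
by move=> k0; rewrite pk k0.
Qed.

(* p and s p lie in adjacent alcoves, so the only hyperplane H_{b,k}
   separating them is their common wall H_s. *)
Lemma sep_alcove_pt_simple_root a b k : simple_root Phi z a -> b \in Phi ->
  sep b k p (refl a 0 p) -> refl b k%:~R =1 refl a 0.
Proof.
move=> sa hb S; have [[ha _] _] := sa; have hb' := root_refl0 RS ha hb.
have pa_b : dot (refl a 0 p) b = dot p (refl a 0 b).
  by rewrite dot_refl ?mul0r ?addr0 // (dot_root_neq0 RS).
have k0 : k = 0.
  apply: (@intr_eq_between R); rewrite mulr0z sub0r add0r.
  by apply: sep_between S _ _; rewrite ?pa_b alcove_pt_range.
move: S; rewrite k0 mulr0z /sep /side pa_b !subr0 => S.
have [pb|npb] := pselect (pos z b).
  have [->|nba] := eqVneq b a; first by [].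
  have /andP[+ _] := alcove_pt_pos hb' (simple_refl0_pos RS REG sa hb pb nba).
  have /andP[+ _] := alcove_pt_pos hb pb.
  by move=> ? ?; move: S; rewrite ltNge mulr_ge0 // ltW.
have [e|nba] := eqVneq (- b) a.
  by move=> v; rewrite -e -[X in refl X _](opprK b) -{1}oppr0 reflN.
have := simple_refl0_pos RS REG sa (rootN RS hb) (posN REG hb npb) nba.
rewrite refl0N => /(alcove_pt_pos (rootN RS hb'))/andP[+ _].
have /andP[+ _] := alcove_pt_pos (rootN RS hb) (posN REG hb npb).
rewrite !dotNr !oppr_gt0 => ? ?.
by move: S; rewrite ltNge -mulrNN mulr_ge0 // oppr_ge0 ltW.
Qed.

Lemma sep_alcove_pt_highest_root t b k : highest_root Phi z t -> b \in Phi -> pos z b ->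
  sep b k p (refl t 1 p) -> refl b k%:~R =1 refl t 1.
Proof.
move=> H hb pb S; have [ht _] := H; have tt := dot_root_gt0 RS ht.
have pt_b : dot (refl t 1 p) b = dot p (refl t 0 b) + cartan t b.
  by rewrite dot_refl ?mul1r // lt0r_neq0.
have /andP[pb0 pb1] := alcove_pt_pos hb pb.
have [bt|nbt] := eqVneq b t.
  move: S pt_b pb0 pb1; rewrite bt (refl0_self RS) // dotNr => S pt_t pt0 pt1.
  have tt2 : cartan t t = 2 by rewrite /cartan; field; rewrite lt0r_neq0.
  have k1 : k = 1.
    apply: (@intr_eq_between R); rewrite mulr1z.
    by apply: sep_between S _ _; rewrite ?pt_t ?tt2; apply/andP; split; lra.
  by move=> v; rewrite k1.
have [E0|E1] := highest_cartan RS REG H hb pb nbt.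
  move: S; rewrite /sep /side pt_b E0 refl0E E0 scale0r subr0 addr0 -expr2.
  by rewrite ltNge sqr_ge0.
have tb : 0 < dot t b by rewrite (dot_cartan _ (lt0r_neq0 tt)) E1 mul1r divr_gt0.
have [htb ptb] := highest_subr RS REG H hb pb nbt tb.
have /andP[] := alcove_pt_pos htb ptb; rewrite dotBr => ptb0 ptb1.
have /andP[k_gt0 k_lt1] : 0 < (k%:~R : R) < 1.
  by apply: sep_between S _ _; rewrite ?pt_b ?refl0E ?E1 ?scale1r ?dotBr; apply/andP; split; lra.
have k0 : k = 0.
  by apply: (@intr_eq_between R); rewrite mulr0z sub0r add0r; apply/andP; split; lra.
by move: k_gt0; rewrite k0 ltxx.
Qed.

Lemma sep_alcove_pt_simple_refl s b k : simple_refl Phi z s -> b \in Phi ->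
  sep b k p (s p) -> refl b k%:~R =1 s.
Proof.
case=> [[a [sa ->]]|[t [ht ->]]] hb; first exact: sep_alcove_pt_simple_root.
have [pb|npb] := pselect (pos z b); first exact: sep_alcove_pt_highest_root.
rewrite -sepN => S v; rewrite -reflN -mulrNz.
exact: sep_alcove_pt_highest_root ht (rootN RS hb) (posN REG hb npb) S v.
Qed.

End AlcovePoint.

Section Exchange.
Variables (R : realType) (d : nat) (Phi : seq 'rV[R]_d) (z : 'rV[R]_d).
Hypothesis RS : root_system Phi.
Hypothesis REG : regular Phi z.
Implicit Types (f g s : 'rV[R]_d -> 'rV[R]_d) (l : seq ('rV[R]_d -> 'rV[R]_d)).

Local Notation p := (alcove_pt Phi z).

Definition simple_word l := forall s, List.In s l -> simple_refl Phi z s.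

Definition has_word f := exists l, simple_word l /\ f = wprod l.

Lemma wprod_cat l1 l2 v : wprod (l1 ++ l2) v = wprod l1 (wprod l2 v).
Proof. by elim: l1 => //= f l ->. Qed.

Lemma simple_reflK s : simple_refl Phi z s -> involutive s.
Proof.
by case=> [[a [[[ha _] _] ->]]|[t [[ht _] ->]]]; apply: reflK; apply: (dot_root_neq0 RS).
Qed.

Lemma in_W_id : in_W Phi id.
Proof. by exists [::]. Qed.

Lemma in_W_comp f g : in_W Phi f -> in_W Phi g -> in_W Phi (f \o g).
Proof.
move=> [l [hl ->]] [m [hm ->]]; exists (l ++ m); split.
  by move=> x /List.in_app_iff[]; [apply: hl|apply: hm].
by apply: funext => v; rewrite wprod_cat.
Qed.

Lemma in_W_refl b (k : int) : b \in Phi -> in_W Phi (refl b k%:~R).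
Proof.
by move=> hb; exists [:: refl b k%:~R]; split; [move=> f [<-|[]]; exists b, k|].
Qed.

Lemma in_W_simple s : simple_refl Phi z s -> in_W Phi s.
Proof.
by case=> [[a [[[ha _] _] ->]]|[t [[ht _] ->]]]; [apply: (in_W_refl 0 ha)|apply: (in_W_refl 1 ht)].
Qed.

Lemma in_W_conj f b (k : int) : in_W Phi f -> b \in Phi ->
  exists b' (k' : int), [/\ b' \in Phi,
    forall v, side b k%:~R (f v) = side b' k'%:~R v &
    forall v, refl b k%:~R (f v) = f (refl b' k'%:~R v)].
Proof.
case=> l [hl ->] {f}; elim: l hl b k => [|g l IH] hl b k hb; first by exists b, k.
have [g' [m [hg' ->]]] := hl g (or_introl erefl).
have gg := dot_root_neq0 RS hg'.
have [c Ec] := cartan_int RS hg' hb.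
have [b' [k' [hb' Hside Hrefl]]] :=
  IH (fun f hf => hl f (or_intror hf)) _ (k - m * c) (root_refl0 RS hg' hb).
have Ekmc : k%:~R - m%:~R * cartan g' b = (k - m * c)%:~R :> R.
  by rewrite Ec intrB intrM.
exists b', k'; split=> // v /=.
  by rewrite -Hside /side dot_refl // -Ekmc; ring.
by rewrite refl_conj ?(dot_root_neq0 RS) // Ekmc Hrefl.
Qed.

Lemma side_in_W_alcove_pt_neq0 f b (k : int) : in_W Phi f -> b \in Phi ->
  side b k%:~R (f p) != 0.
Proof.
move=> fW hb; have [b' [k' [hb' -> _]]] := in_W_conj k fW hb.
exact: side_alcove_pt_neq0.
Qed.

Lemma sep_in_W_simple f s b (k : int) : in_W Phi f -> simple_refl Phi z s -> b \in Phi ->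
  sep b k (f p) (f (s p)) -> refl b k%:~R \o f \o s =1 f.
Proof.
move=> fW hs hb; have [b' [k' [hb' Hside Hrefl]]] := in_W_conj k fW hb.
rewrite /sep !Hside => /(sep_alcove_pt_simple_refl RS REG hs hb') Hs v /=.
by rewrite Hrefl Hs simple_reflK.
Qed.

(* Walking along the gallery of the word l, H_{b,k} must be crossed at some letter s. *)
Lemma sep_word_delete b (k : int) l f : b \in Phi -> simple_word l -> in_W Phi f ->
  sep b k (f p) (f (wprod l p)) ->
  exists l1 s l2, [/\ l = l1 ++ s :: l2, simple_refl Phi z s &
                      refl b k%:~R \o f \o wprod l1 \o s =1 f \o wprod l1].
Proof.
move=> hb; elim: l f => [|s l IH] f hl fW S.
  by move: S; rewrite /sep -expr2 ltNge sqr_ge0.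
have hs := hl s (or_introl erefl).
have fsW := in_W_comp fW (in_W_simple hs).
have [Ss|Sl] := sep_split (side_in_W_alcove_pt_neq0 k fsW hb) S.
  by exists [::], s, l; split=> //; exact: sep_in_W_simple.
have [l1 [s' [l2 [-> hs' H]]]] := IH (f \o s) (fun x hx => hl x (or_intror hx)) fsW Sl.
by exists (s :: l1), s', l2.
Qed.

Lemma sep_alcove_pt_refl f g b (k : int) : in_W Phi f -> in_W Phi g -> b \in Phi ->
  ~ sep b k p (g p) -> ~ sep b k (g p) (f p) -> sep b k p (refl b k%:~R (f p)).
Proof.
move=> fW gW hb pg gf.
have side_neq0 h (hW : in_W Phi h) := side_in_W_alcove_pt_neq0 k hW hb.
apply: sep_refl; first exact: (dot_root_neq0 RS).
- exact: (side_alcove_pt_neq0 RS REG).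
- exact: side_neq0 fW.
- by move=> /(sep_split (side_neq0 _ gW)) [].
Qed.

Lemma len_le_size l : simple_word l -> (len Phi z (wprod l) <= size l)%N.
Proof.
move=> hl; rewrite /len; case: pselect => [P|//].
by case: (ex_minnP P) => m _ min_m; apply: min_m; apply/asboolP; exists l.
Qed.

Lemma has_word_reduced f : has_word f ->
  exists l, [/\ simple_word l, f = wprod l & size l = len Phi z f].
Proof.
move=> [l0 [hl0 ->]]; rewrite /len; case: pselect => [P|[]].
  by case: (ex_minnP P) => m /asboolP[l [<- [hl ->]]] _; exists l.
by exists (size l0); apply/asboolP; exists l0.
Qed.

Lemma has_word_len_gt0 f : (0 < len Phi z f)%N -> has_word f.
Proof. by rewrite /len; case: pselect => // -[k /asboolP[l [_ [hl fl]]]] _; exists l. Qed.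

Lemma has_word_comp f s : has_word f -> simple_refl Phi z s -> has_word (f \o s).
Proof.
move=> [l [hl ->]] hs; exists (l ++ [:: s]); split.
  by move=> x /List.in_app_iff[|[<-|[]]]; [apply: hl|].
by apply: funext => v; rewrite wprod_cat.
Qed.

Lemma has_word_compK f s : simple_refl Phi z s -> has_word (f \o s) -> has_word f.
Proof.
move=> hs /has_word_comp/(_ hs).
by rewrite (_ : f \o s \o s = f) //; apply: funext => v /=; rewrite simple_reflK.
Qed.

Lemma exchange f b (k : int) : b \in Phi -> has_word f -> sep b k p (f p) ->
  (len Phi z (refl b k%:~R \o f) < len Phi z f)%N.
Proof.
move=> hb /has_word_reduced[l [hl -> <-]] S.
have [l1 [s [l2 [El hs H]]]] := sep_word_delete hb hl in_W_id S.
have -> : refl b k%:~R \o wprod l = wprod (l1 ++ l2).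
  by apply: funext => v; rewrite El /= !wprod_cat /=; apply: H.
have hl' : simple_word (l1 ++ l2).
  by move=> x /List.in_app_iff hx; apply: hl; rewrite El List.in_app_iff /=; tauto.
by rewrite (leq_ltn_trans (len_le_size hl')) // El !size_cat /= addnS.
Qed.

Lemma in_W_rprod (r : nat -> 'rV[R]_d -> 'rV[R]_d) alpha (c : int) n : alpha \in Phi ->
  (forall t, (1 <= t <= n)%N -> r t = refl alpha (c + t%:Z)%:~R) ->
  forall t, (t <= n)%N -> in_W Phi (rprod r t).
Proof.
move=> ha hr; elim=> [|t IH] ht; first exact: in_W_id.
by rewrite /= hr ?ht //; apply: in_W_comp (in_W_refl _ ha) (IH (ltnW ht)).
Qed.

End Exchange.

Theorem proposition4p5 (R : realType) (d : nat) (Phi : seq 'rV[R]_d)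
  (z : 'rV[R]_d) (w si : 'rV[R]_d -> 'rV[R]_d) (alpha : 'rV[R]_d) (c : int)
  (n : nat) (r : nat -> 'rV[R]_d -> 'rV[R]_d) :
  root_system Phi -> regular Phi z ->
  in_W Phi w ->
  simple_refl Phi z si -> (len Phi z (w \o si) < len Phi z w)%N ->
  alpha \in Phi -> (1 <= n)%N ->
  (forall t : nat, (1 <= t <= n)%N -> r t = refl alpha (c + t%:Z)%:~R) ->
  (forall t : nat, (1 <= t <= n)%N ->
     (len Phi z (rprod r t.-1 \o w \o si) < len Phi z (rprod r t \o w \o si))%N /\
     rprod r t \o w \o si <> rprod r t.-1 \o w) ->
  (len Phi z (rprod r n.-1 \o w) < len Phi z (r n \o rprod r n.-1 \o w))%N.
Proof.
move=> RS REG wW hsi hlen ha n_gt0 hr hyp.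
case: n n_gt0 hr hyp => // n _ hr hyp.
have ysi_word : has_word Phi z (rprod r n \o w \o si).
  case: n hr hyp => [_ _|n _ hyp].
    exact: has_word_comp (has_word_len_gt0 (leq_ltn_trans (leq0n _) hlen)) hsi.
  by apply: has_word_len_gt0; case: (hyp n.+1 (leqnSn _)) => + _; apply: leq_ltn_trans.
set y := rprod r n \o w in ysi_word *; set k := c + n.+1%:Z.
have er : r n.+1 = refl alpha k%:~R by apply: hr; rewrite leqnn.
have [len_lt r_ne] : (len Phi z (y \o si) < len Phi z (refl alpha k%:~R \o y \o si))%N
                     /\ refl alpha k%:~R \o y \o si <> y.
  by rewrite -er; exact (hyp n.+1 (leqnn n.+1)).
have yW : in_W Phi y := in_W_comp (in_W_rprod ha hr (leqnSn n)) wW.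
have ry_word : has_word Phi z (refl alpha k%:~R \o y).
  exact: has_word_compK hsi (has_word_len_gt0 (leq_ltn_trans (leq0n _) len_lt)).
set p := alcove_pt Phi z.
have not_sep_ysi : ~ sep alpha k p (y (si p)).
  by move=> S; have := ltn_trans len_lt (exchange RS REG ha ysi_word S); rewrite ltnn.
have not_sep_ysi_y : ~ sep alpha k (y (si p)) (y p).
  by rewrite sepC => S; apply: r_ne; apply: funext; apply: sep_in_W_simple S.
have := exchange RS REG ha ry_word
  (sep_alcove_pt_refl RS REG yW (in_W_comp yW (in_W_simple hsi)) ha not_sep_ysi not_sep_ysi_y).
rewrite er (_ : _ \o (_ \o y) = y) //.
by apply: funext => v; apply: reflK (dot_root_neq0 RS ha) _.
Qed.
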